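(* Let $\gamma\in(0,\pi)$, $\Delta>0$, $\Sigma_0,\Theta_0\in\mathbb{R}$, and define $$u_s(x,t)=-\frac{2i\,e^{i\Sigma+\Theta+2i\gamma}\sin\gamma}{\Delta\left(e^{2\Theta+i\gamma}+1\right)},\quad \Sigma=\frac{(t-4\Delta^4x)\cos\gamma}{2\Delta^2}+\Sigma_0,\quad \Theta=\frac{(t+4\Delta^4x)\sin\gamma}{2\Delta^2}+\Theta_0.$$ Set $c_s=-\frac{1}{4\Delta^4}$, $k_s=0$, $\Omega_s=-\frac{\cos\gamma}{\Delta^2}$, $$\varphi_s(y)=\sqrt{\frac{2\sin^2\gamma}{\Delta^2\left(\cos\gamma+\cosh\left(4\Delta^2y\sin\gamma+2\Theta_0\right)\right)}}.$$ Then: (i) $|u_s(x,t)|=\varphi_s(x-c_st)$; (ii) there is a constant $\theta_{0s}\in\mathbb{R}$ such that, with $$\theta_s(y)=-\arctan\!\left(\tan\tfrac{\gamma}{2}\,\tanh\left(2\Delta^2y\sin\gamma+\Theta_0\right)\right)-\cot\gamma\,\left(2\Delta^2y\sin\gamma+\Theta_0\right)+\theta_{0s},$$ one has $u_s(x,t)=\varphi_s(x-c_st)\,e^{i\left(k_sx-\Omega_st+\theta_s(x-c_st)\right)}$ for all $x,t$; (iii) $\varphi=\varphi_s$ satisfies $\varphi_y^2=-\frac{1}{16c^2}V(\varphi)$ with $c=c_s$, $k=k_s$, $\Omega=\Omega_s$ and $A=B=0$, and $\theta_s$ satisfies $\theta_y=\frac{\varphi^4-2ck\varphi^2-2\Omega\varphi^2+4A}{4c\varphi^2}$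 with the same parameters.
   Context: Here $V(\varphi)=\varphi^{-2}\left(\varphi^8+c_3\varphi^6+c_2\varphi^4+c_1\varphi^2+c_0\right)$ with $c_3=4ck-4\Omega$, $c_2=4(c^2k^2+\Omega^2+2A+c(4-2k\Omega))$, $c_1=-32Bc$, $c_0=16A^2$. The function $u_s$ is the one-soliton solution of $u_{tx}=u-i|u|^2u_x$. *)

(* classical reals; complex numbers encoded as pairs (Re, Im). *)
From Stdlib Require Import Reals.
Open Scope R_scope.

Definition C : Type := (R * R)%type.
Definition RtoC (a : R) : C := (a, 0).
Definition Ci : C := (0, 1).
Definition Cadd (z w : C) : C := (fst z + fst w, snd z + snd w).
Definition Cmul (z w : C) : C :=
  (fst z * fst w - snd z * snd w, fst z * snd w + snd z * fst w).
Definition Cinv (z : C) : C :=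
  (fst z / (fst z ^ 2 + snd z ^ 2), - snd z / (fst z ^ 2 + snd z ^ 2)).
Definition Cdiv (z w : C) : C := Cmul z (Cinv w).
Definition Cexp (z : C) : C := (exp (fst z) * cos (snd z), exp (fst z) * sin (snd z)).
Definition Cmod (z : C) : R := sqrt (fst z ^ 2 + snd z ^ 2).

Definition Sig (gam Del Sig0 x t : R) : R :=
  (t - 4 * Del ^ 4 * x) * cos gam / (2 * Del ^ 2) + Sig0.
Definition Tht (gam Del Th0 x t : R) : R :=
  (t + 4 * Del ^ 4 * x) * sin gam / (2 * Del ^ 2) + Th0.

Definition u_s (gam Del Sig0 Th0 x t : R) : C :=
  Cdiv
    (Cmul (Cmul (RtoC (-2)) Ci)
          (Cmul (Cexp (Tht gam Del Th0 x t, Sig gam Del Sig0 x t + 2 * gam))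
                (RtoC (sin gam))))
    (Cmul (RtoC Del) (Cadd (Cexp (2 * Tht gam Del Th0 x t, gam)) (RtoC 1))).

Definition c_s (Del : R) : R := - (1 / (4 * Del ^ 4)).
Definition k_s : R := 0.
Definition Omega_s (gam Del : R) : R := - (cos gam / Del ^ 2).

Definition phi_s (gam Del Th0 y : R) : R :=
  sqrt (2 * (sin gam) ^ 2 /
        (Del ^ 2 * (cos gam + cosh (4 * Del ^ 2 * y * sin gam + 2 * Th0)))).

Definition theta_s (gam Del Th0 th0s y : R) : R :=
  - atan (tan (gam / 2) * tanh (2 * Del ^ 2 * y * sin gam + Th0))
  - (cos gam / sin gam) * (2 * Del ^ 2 * y * sin gam + Th0) + th0s.

Definition Vpot (c k Om A B p : R) : R :=
  let c3 := 4 * c * k - 4 * Om in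
  let c2 := 4 * (c ^ 2 * k ^ 2 + Om ^ 2 + 2 * A + c * (4 - 2 * k * Om)) in
  let c1 := - 32 * B * c in
  let c0 := 16 * A ^ 2 in
  / (p ^ 2) * (p ^ 8 + c3 * p ^ 6 + c2 * p ^ 4 + c1 * p ^ 2 + c0).

From Pilot Require Import Defs.
From Stdlib Require Import Reals Lra Psatz.
Open Scope R_scope.

(* Write E = e^Theta, c = cos(gam/2), s = sin(gam/2).  The denominator of u_s
   factors as  e^{2 Theta + i gam} + 1 = 2 E e^{i gam/2} (c cosh Theta + i s sinh Theta),
   and the last factor has modulus rho(Theta) = sqrt(c^2 cosh^2 + s^2 sinh^2) and
   argument shift(Theta) = atan(tan(gam/2) tanh Theta).  Hence u_s is the polar
   form  (sin gam / (Del rho)) e^{i (Sigma + 3 gam/2 - pi/2 - shift)}.  Since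
   2 rho(w)^2 = cos gam + cosh(2 w), the modulus is exactly phi_s, which gives (ii)
   for a suitable phase constant theta0 and then (i).  For (iii) we differentiate
   phi_s and theta_s by the chain rule (the derivative of shift is
   sin gam / (cos gam + cosh 2w)) and check both ODEs algebraically using
   sin^2 + cos^2 = 1 and cosh^2 - sinh^2 = 1. *)

(* The pair type of Defs (not the binomial coefficient of Reals). *)
Notation Cpx := Defs.C.

(* Complex numbers in polar form r e^{i a}; mainTheorem7 states (ii) in this shape. *)
Definition polar (r a : R) : Cpx := Cmul (RtoC r) (Cexp (0, a)).

Lemma polar_eq (r a : R) : polar r a = (r * cos a, r * sin a).
Proof. unfold polar, Cmul, RtoC, Cexp; simpl; rewrite exp_0; f_equal; ring. Qed.

Lemma polar_norm2 (r a : R) : (r * cos a) ^ 2 + (r * sin a) ^ 2 = r ^ 2.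
Proof. pose proof (sin2_cos2 a) as H; unfold Rsqr in H; nra. Qed.

Lemma Cmod_polar (r a : R) : 0 <= r -> Cmod (polar r a) = r.
Proof.
  intros Hr; unfold Cmod; rewrite polar_eq; cbn [fst snd].
  rewrite polar_norm2; exact (sqrt_pow2 r Hr).
Qed.

Lemma Cmul_real_polar (s r a : R) : Cmul (RtoC s) (polar r a) = polar (s * r) a.
Proof. rewrite !polar_eq; unfold Cmul, RtoC; simpl; f_equal; ring. Qed.

Lemma Cdiv_polar (r1 r2 a1 a2 : R) :
  r2 <> 0 -> Cdiv (polar r1 a1) (polar r2 a2) = polar (r1 / r2) (a1 - a2).
Proof.
  intros Hr2; rewrite !polar_eq; unfold Cdiv, Cmul, Cinv; cbn [fst snd].
  rewrite polar_norm2, cos_minus, sin_minus; f_equal; field; exact Hr2.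
Qed.

Lemma numerator_polar (s w a : R) :
  Cmul (Cmul (RtoC (-2)) Ci) (Cmul (Cexp (w, a)) (RtoC s))
  = polar (2 * s * exp w) (a - PI / 2).
Proof.
  rewrite polar_eq; unfold Cmul, Cexp, RtoC, Ci; simpl.
  rewrite cos_minus, sin_minus, cos_PI2, sin_PI2; f_equal; ring.
Qed.

Lemma exp_cosh_sinh (w : R) : exp w = cosh w + sinh w.
Proof. unfold cosh, sinh; field. Qed.

Lemma cosh_sq_sub_sinh_sq (w : R) : cosh w ^ 2 - sinh w ^ 2 = 1.
Proof.
  unfold cosh, sinh; rewrite exp_Ropp.
  pose proof (exp_pos w); field; lra.
Qed.

Lemma cosh_double (w : R) : cosh (2 * w) = cosh w ^ 2 + sinh w ^ 2.
Proof.
  unfold cosh, sinh; rewrite !exp_Ropp.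
  replace (2 * w) with (w + w) by ring; rewrite exp_plus.
  pose proof (exp_pos w); field; lra.
Qed.

Lemma cosh_ge_1 (w : R) : 1 <= cosh w.
Proof.
  unfold cosh; rewrite exp_Ropp; pose proof (exp_pos w) as He.
  apply Rmult_le_reg_r with (2 * exp w); [lra|].
  field_simplify; [pose proof (pow2_ge_0 (exp w - 1)); nra | lra].
Qed.

Lemma derivable_pt_lim_tanh (w : R) : derivable_pt_lim tanh w (/ cosh w ^ 2).
Proof.
  assert (Hch : cosh w <> 0) by (pose proof (cosh_ge_1 w); lra).
  replace (/ cosh w ^ 2) with ((cosh w * cosh w - sinh w * sinh w) / Rsqr (cosh w)).
  - apply (derivable_pt_lim_div sinh cosh);
      [apply derivable_pt_lim_sinh | apply derivable_pt_lim_cosh | exact Hch].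
  - replace (cosh w * cosh w - sinh w * sinh w) with 1
      by (rewrite <- (cosh_sq_sub_sinh_sq w); ring).
    unfold Rsqr; field; exact Hch.
Qed.

(* Restating the value of a derivative: lets a chain-rule computation be
   followed by an algebraic simplification of its result. *)
Lemma derivable_pt_lim_value (f : R -> R) (x l l' : R) :
  derivable_pt_lim f x l -> l = l' -> derivable_pt_lim f x l'.
Proof. intros H <-; exact H. Qed.

Section HalfAngle.

Variable gam : R.
Hypothesis Hgam : 0 < gam < PI.

Lemma cos_half_pos : 0 < cos (gam / 2).
Proof. apply cos_gt_0; lra. Qed.

Lemma sin_gam_pos : 0 < sin gam.
Proof. apply sin_gt_0; lra. Qed.

Lemma sin_half_angle : sin gam = 2 * sin (gam / 2) * cos (gam / 2).
Proof. rewrite <- sin_2a; f_equal; field. Qed.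

Lemma cos_half_angle : cos gam = cos (gam / 2) ^ 2 - sin (gam / 2) ^ 2.
Proof. replace gam with (2 * (gam / 2)) at 1 by field; rewrite cos_2a; ring. Qed.

Lemma half_sq_sum : sin (gam / 2) ^ 2 + cos (gam / 2) ^ 2 = 1.
Proof. pose proof (sin2_cos2 (gam / 2)) as H; unfold Rsqr in H; lra. Qed.

(* rho w is the modulus of cos(gam/2) cosh w + i sin(gam/2) sinh w; the
   soliton amplitude is inversely proportional to it. *)
Definition rho (w : R) : R :=
  sqrt (cos (gam / 2) ^ 2 * cosh w ^ 2 + sin (gam / 2) ^ 2 * sinh w ^ 2).

Lemma rho_sq (w : R) :
  rho w ^ 2 = cos (gam / 2) ^ 2 * cosh w ^ 2 + sin (gam / 2) ^ 2 * sinh w ^ 2.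
Proof. unfold rho; apply pow2_sqrt; nra. Qed.

Lemma rho_pos (w : R) : 0 < rho w.
Proof.
  pose proof cos_half_pos; pose proof (cosh_ge_1 w).
  assert (0 < (cos (gam / 2) * cosh w) ^ 2) by (apply pow_lt; nra).
  pose proof (pow2_ge_0 (sin (gam / 2) * sinh w)).
  unfold rho; apply sqrt_lt_R0; nra.
Qed.

Lemma rho_sq_double (w : R) : 2 * rho w ^ 2 = cos gam + cosh (2 * w).
Proof.
  rewrite rho_sq, cos_half_angle, cosh_double.
  pose proof half_sq_sum; pose proof (cosh_sq_sub_sinh_sq w); nra.
Qed.

Lemma cos_plus_cosh_pos (z : R) : 0 < cos gam + cosh z.
Proof.
  replace z with (2 * (z / 2)) by field; rewrite <- rho_sq_double.
  pose proof (rho_pos (z / 2)); nra.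
Qed.

(* The phase correction atan(tan(gam/2) tanh w) is the argument of
   cos(gam/2) cosh w + i sin(gam/2) sinh w. *)
Definition shift (w : R) : R := atan (tan (gam / 2) * tanh w).

Lemma sqrt_one_plus_shift_sq (w : R) :
  sqrt (1 + (tan (gam / 2) * tanh w)²) = rho w / (cos (gam / 2) * cosh w).
Proof.
  pose proof cos_half_pos; pose proof (cosh_ge_1 w); pose proof (rho_pos w).
  apply sqrt_lem_1.
  - pose proof (Rle_0_sqr (tan (gam / 2) * tanh w)); lra.
  - apply Rlt_le, Rdiv_lt_0_compat; nra.
  - unfold tan, tanh, Rsqr.
    replace (rho w / (cos (gam / 2) * cosh w) * (rho w / (cos (gam / 2) * cosh w)))
      with (rho w ^ 2 / (cos (gam / 2) * cosh w) ^ 2) by (field; nra).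
    rewrite rho_sq; field; nra.
Qed.

Lemma cos_shift (w : R) : cos (shift w) = cos (gam / 2) * cosh w / rho w.
Proof.
  pose proof cos_half_pos; pose proof (cosh_ge_1 w); pose proof (rho_pos w).
  unfold shift; rewrite cos_atan, sqrt_one_plus_shift_sq; field; nra.
Qed.

Lemma sin_shift (w : R) : sin (shift w) = sin (gam / 2) * sinh w / rho w.
Proof.
  pose proof cos_half_pos; pose proof (cosh_ge_1 w); pose proof (rho_pos w).
  unfold shift; rewrite sin_atan, sqrt_one_plus_shift_sq; unfold tan, tanh; field; nra.
Qed.

Lemma denominator_polar (w : R) :
  Cadd (Cexp (2 * w, gam)) (RtoC 1) = polar (2 * exp w * rho w) (gam / 2 + shift w).
Proof.
  pose proof (rho_pos w).
  rewrite polar_eq, cos_plus, sin_plus, cos_shift, sin_shift.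
  unfold Cadd, Cexp, RtoC; cbn [fst snd].
  replace (2 * w) with (w + w) by ring.
  rewrite exp_plus, exp_cosh_sinh, cos_half_angle, sin_half_angle.
  pose proof half_sq_sum; pose proof (cosh_sq_sub_sinh_sq w).
  f_equal; field_simplify; nra.
Qed.

Lemma shift_derivative (w : R) :
  derivable_pt_lim shift w (sin gam / (cos gam + cosh (2 * w))).
Proof.
  pose proof cos_half_pos; pose proof (cosh_ge_1 w); pose proof (rho_pos w).
  eapply derivable_pt_lim_value.
  - apply (derivable_pt_lim_comp (fun w => tan (gam / 2) * tanh w) atan).
    + apply derivable_pt_lim_mult; [apply derivable_pt_lim_const | apply derivable_pt_lim_tanh].
    + apply derivable_pt_lim_atan.
  - rewrite <- rho_sq_double, rho_sq, sin_half_angle; unfold tan, tanh; cbv beta.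
    pose proof (rho_sq w) as Hr.
    field; repeat split; [nra | lra | lra].
Qed.

End HalfAngle.

Section Soliton.

Variables gam Del Sig0 Th0 : R.
Hypothesis Hgam : 0 < gam < PI.
Hypothesis HDel : 0 < Del.

Definition wave (y : R) : R := 2 * Del ^ 2 * y * sin gam + Th0.

Lemma wave_travelling (x t : R) : wave (x - c_s Del * t) = Tht gam Del Th0 x t.
Proof. unfold wave, c_s, Tht; field; lra. Qed.

Lemma phi_s_closed (y : R) : phi_s gam Del Th0 y = sin gam / (Del * rho gam (wave y)).
Proof.
  pose proof (sin_gam_pos gam Hgam); pose proof (rho_pos gam Hgam (wave y)).
  unfold phi_s.
  replace (4 * Del ^ 2 * y * sin gam + 2 * Th0) with (2 * wave y) by (unfold wave; ring).
  rewrite <- rho_sq_double by exact Hgam.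
  set (r := rho gam (wave y)) in *.
  assert (0 < Del * r) by nra.
  apply sqrt_lem_1.
  - apply Rlt_le, Rdiv_lt_0_compat; [nra | apply Rmult_lt_0_compat; nra].
  - apply Rlt_le, Rdiv_lt_0_compat; nra.
  - field; nra.
Qed.

Lemma u_s_polar (x t : R) :
  u_s gam Del Sig0 Th0 x t =
  polar (sin gam / (Del * rho gam (Tht gam Del Th0 x t)))
        (Sig gam Del Sig0 x t + 2 * gam - PI / 2 - (gam / 2 + shift gam (Tht gam Del Th0 x t))).
Proof.
  pose proof (rho_pos gam Hgam (Tht gam Del Th0 x t)).
  pose proof (exp_pos (Tht gam Del Th0 x t)).
  unfold u_s; rewrite numerator_polar, denominator_polar by exact Hgam.
  assert (0 < Del * (2 * exp (Tht gam Del Th0 x t) * rho gam (Tht gam Del Th0 x t)))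
    by (apply Rmult_lt_0_compat; nra).
  rewrite Cmul_real_polar, Cdiv_polar by lra.
  f_equal; field; nra.
Qed.

Definition theta0 : R := Sig0 + cos gam / sin gam * Th0 + 3 * gam / 2 - PI / 2.

Lemma soliton_phase (x t : R) :
  k_s * x - Omega_s gam Del * t + theta_s gam Del Th0 theta0 (x - c_s Del * t)
  = Sig gam Del Sig0 x t + 2 * gam - PI / 2 - (gam / 2 + shift gam (Tht gam Del Th0 x t)).
Proof.
  pose proof (sin_gam_pos gam Hgam).
  rewrite <- wave_travelling; unfold theta_s, shift.
  fold (wave (x - c_s Del * t)).
  unfold wave, theta0, k_s, Omega_s, Sig, c_s; field; lra.
Qed.

Lemma soliton_polar_form (x t : R) :
  u_s gam Del Sig0 Th0 x t =
  polar (phi_s gam Del Th0 (x - c_s Del * t))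
        (k_s * x - Omega_s gam Del * t + theta_s gam Del Th0 theta0 (x - c_s Del * t)).
Proof. rewrite u_s_polar, soliton_phase, phi_s_closed, wave_travelling; reflexivity. Qed.

Lemma soliton_modulus (x t : R) :
  Cmod (u_s gam Del Sig0 Th0 x t) = phi_s gam Del Th0 (x - c_s Del * t).
Proof. rewrite soliton_polar_form; apply Cmod_polar; unfold phi_s; apply sqrt_pos. Qed.

Lemma wave_derivative (y : R) : derivable_pt_lim wave y (2 * Del ^ 2 * sin gam).
Proof.
  eapply derivable_pt_lim_value.
  - apply derivable_pt_lim_plus; [| apply derivable_pt_lim_const].
    apply derivable_pt_lim_mult; [| apply derivable_pt_lim_const].
    apply derivable_pt_lim_mult; [apply derivable_pt_lim_const | apply derivable_pt_lim_id].
  - cbv beta; ring.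
Qed.

Lemma phi_s_sq (y : R) :
  phi_s gam Del Th0 y ^ 2 = 2 * sin gam ^ 2 / (Del ^ 2 * (cos gam + cosh (2 * wave y))).
Proof.
  pose proof (rho_pos gam Hgam (wave y)).
  rewrite phi_s_closed, <- rho_sq_double by exact Hgam.
  field; nra.
Qed.

Lemma phi_s_pos (y : R) : 0 < phi_s gam Del Th0 y.
Proof.
  pose proof (sin_gam_pos gam Hgam); pose proof (rho_pos gam Hgam (wave y)).
  rewrite phi_s_closed; apply Rdiv_lt_0_compat; nra.
Qed.

Lemma phi_s_derivative (y : R) :
  derivable_pt_lim (phi_s gam Del Th0) y
    (- 4 * sin gam ^ 3 * sinh (2 * wave y)
     / ((cos gam + cosh (2 * wave y)) ^ 2 * phi_s gam Del Th0 y)).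
Proof.
  pose proof (cos_plus_cosh_pos gam Hgam (2 * wave y)).
  pose proof (phi_s_pos y).
  set (v := fun y => 2 * sin gam ^ 2
                     / (Del ^ 2 * (cos gam + cosh (4 * Del ^ 2 * y * sin gam + 2 * Th0)))).
  assert (Hv : v y = phi_s gam Del Th0 y ^ 2).
  { rewrite phi_s_sq; unfold v, wave; do 4 f_equal; ring. }
  change (phi_s gam Del Th0) with (fun y => sqrt (v y)).
  eapply derivable_pt_lim_value.
  - apply (derivable_pt_lim_comp v sqrt).
    + apply derivable_pt_lim_div; [apply derivable_pt_lim_const | | ].
      * apply derivable_pt_lim_mult; [apply derivable_pt_lim_const |].
        apply derivable_pt_lim_plus; [apply derivable_pt_lim_const |].
        apply (derivable_pt_lim_comp (fun y => 4 * Del ^ 2 * y * sin gam + 2 * Th0) cosh).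
        -- apply derivable_pt_lim_plus; [| apply derivable_pt_lim_const].
           apply derivable_pt_lim_mult; [| apply derivable_pt_lim_const].
           apply derivable_pt_lim_mult; [apply derivable_pt_lim_const | apply derivable_pt_lim_id].
        -- apply derivable_pt_lim_cosh.
      * assert (0 < Del ^ 2) by (apply pow_lt; lra).
        cbv beta; apply Rgt_not_eq, Rmult_lt_0_compat; [assumption|].
        apply cos_plus_cosh_pos; exact Hgam.
    + apply derivable_pt_lim_sqrt; nra.
  - change (sqrt (v y)) with (phi_s gam Del Th0 y); cbv beta.
    replace (4 * Del ^ 2 * y * sin gam + 2 * Th0) with (2 * wave y) by (unfold wave; ring).
    unfold Rsqr; field; nra.
Qed.

Lemma Vpot_reduced (c Om p : R) :
  p <> 0 -> Vpot c 0 Om 0 0 p = p ^ 2 * ((p ^ 2 - 2 * Om) ^ 2 + 16 * c).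
Proof. intros Hp; unfold Vpot; field; exact Hp. Qed.

Lemma amplitude_equation (y : R) :
  (- 4 * sin gam ^ 3 * sinh (2 * wave y)
   / ((cos gam + cosh (2 * wave y)) ^ 2 * phi_s gam Del Th0 y)) ^ 2
  = - (1 / (16 * c_s Del ^ 2))
    * Vpot (c_s Del) k_s (Omega_s gam Del) 0 0 (phi_s gam Del Th0 y).
Proof.
  pose proof (cos_plus_cosh_pos gam Hgam (2 * wave y)).
  pose proof (phi_s_pos y); pose proof (sin_gam_pos gam Hgam).
  pose proof (sin2_cos2 gam) as Hpyth; unfold Rsqr in Hpyth.
  pose proof (cosh_sq_sub_sinh_sq (2 * wave y)).
  unfold k_s; rewrite Vpot_reduced by lra.
  replace ((- 4 * sin gam ^ 3 * sinh (2 * wave y)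
            / ((cos gam + cosh (2 * wave y)) ^ 2 * phi_s gam Del Th0 y)) ^ 2)
    with (16 * (sin gam ^ 2) ^ 3 * sinh (2 * wave y) ^ 2
          / ((cos gam + cosh (2 * wave y)) ^ 4 * phi_s gam Del Th0 y ^ 2)) by (field; lra).
  rewrite phi_s_sq.
  replace (sinh (2 * wave y) ^ 2) with (cosh (2 * wave y) ^ 2 - 1) by lra.
  replace (sin gam ^ 2) with (1 - cos gam ^ 2) by lra.
  unfold c_s, Omega_s; field; nra.
Qed.

Lemma theta_s_derivative (th0s y : R) :
  derivable_pt_lim (theta_s gam Del Th0 th0s) y
    (- 2 * Del ^ 2 * (1 + cos gam * cosh (2 * wave y)) / (cos gam + cosh (2 * wave y))).
Proof.
  pose proof (cos_plus_cosh_pos gam Hgam (2 * wave y)).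
  pose proof (sin_gam_pos gam Hgam).
  pose proof (sin2_cos2 gam) as Hpyth; unfold Rsqr in Hpyth.
  change (theta_s gam Del Th0 th0s)
    with (fun y => - shift gam (wave y) - cos gam / sin gam * wave y + th0s).
  eapply derivable_pt_lim_value.
  - apply derivable_pt_lim_plus; [| apply derivable_pt_lim_const].
    apply derivable_pt_lim_minus.
    + apply derivable_pt_lim_opp, (derivable_pt_lim_comp wave (shift gam)).
      * apply wave_derivative.
      * apply shift_derivative; exact Hgam.
    + apply derivable_pt_lim_mult; [apply derivable_pt_lim_const | apply wave_derivative].
  - cbv beta; field_simplify; [| lra | split; lra].
    replace (sin gam ^ 2) with (1 - cos gam ^ 2) by lra; field; lra.
Qed.

Lemma phase_equation (y : R) :
  - 2 * Del ^ 2 * (1 + cos gam * cosh (2 * wave y)) / (cos gam + cosh (2 * wave y))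
  = (phi_s gam Del Th0 y ^ 4 - 2 * c_s Del * k_s * phi_s gam Del Th0 y ^ 2
     - 2 * Omega_s gam Del * phi_s gam Del Th0 y ^ 2 + 4 * 0)
    / (4 * c_s Del * phi_s gam Del Th0 y ^ 2).
Proof.
  pose proof (cos_plus_cosh_pos gam Hgam (2 * wave y)).
  pose proof (sin_gam_pos gam Hgam).
  pose proof (sin2_cos2 gam) as Hpyth; unfold Rsqr in Hpyth.
  replace (phi_s gam Del Th0 y ^ 4) with ((phi_s gam Del Th0 y ^ 2) ^ 2) by ring.
  rewrite phi_s_sq; unfold c_s, k_s, Omega_s.
  replace (sin gam ^ 2) with (1 - cos gam ^ 2) by lra.
  field; repeat split; nra.
Qed.

End Soliton.

Theorem mainTheorem7 (gam Del Sig0 Th0 : R)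
  (Hgam : 0 < gam < PI) (HDel : 0 < Del) :
  (* (i) *)
  (forall x t : R,
     Cmod (u_s gam Del Sig0 Th0 x t) = phi_s gam Del Th0 (x - c_s Del * t)) /\
  (exists th0s : R,
     (* (ii) *)
     (forall x t : R,
        u_s gam Del Sig0 Th0 x t =
        Cmul (RtoC (phi_s gam Del Th0 (x - c_s Del * t)))
             (Cexp (0, k_s * x - Omega_s gam Del * t
                       + theta_s gam Del Th0 th0s (x - c_s Del * t)))) /\
     (* (iii) *)
     (let c := c_s Del in let k := k_s in let Om := Omega_s gam Del in
      let A := 0 in let B := 0 in
      (forall y : R, exists d : R,
         derivable_pt_lim (phi_s gam Del Th0) y d /\
         d ^ 2 = - (1 / (16 * c ^ 2)) * Vpot c k Om A B (phi_s gam Del Th0 y)) /\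
      (forall y : R, exists d : R,
         derivable_pt_lim (theta_s gam Del Th0 th0s) y d /\
         let p := phi_s gam Del Th0 y in
         d = (p ^ 4 - 2 * c * k * p ^ 2 - 2 * Om * p ^ 2 + 4 * A) / (4 * c * p ^ 2)))).
Proof.
  split.
  - intros x t; apply soliton_modulus; assumption.
  - exists (theta0 gam Sig0 Th0); cbv zeta; split; [| split].
    + intros x t; apply soliton_polar_form; assumption.
    + intros y; eexists; split.
      * apply phi_s_derivative; assumption.
      * apply amplitude_equation; assumption.
    + intros y; eexists; split.
      * apply theta_s_derivative; assumption.
      * apply phase_equation; assumption.
Qed.
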